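(* Let $G=(V,E)$ be a graph, let $W\subseteq V$ be a vertex cover of $G$, and let $S\subseteq V$ be a minimal separator of $G$. Let $(D_1,S,D_2)$ be a partition of $V$ such that each of $D_1$ and $D_2$ is a union of connected components of $G-S$, and each of $D_1$ and $D_2$ contains at least one full component associated to $S$. Put $D_1^W=D_1\cap W$ and $D_2^W=D_2\cap W$. Then $$S\setminus W=\{x\in V\setminus W \mid N(x)\cap D_1^W\neq\emptyset \text{ and } N(x)\cap D_2^W\neq\emptyset\}.$$
   Context: All graphs are finite, simple and undirected. $N(x)$ is the open neighborhood of $x$; for $S\subseteq V$, $N(S)=\bigcup_{v\in S}N(v)\setminus S$; $G-S$ is the subgraph induced by $V\setminus S$. A connected component is the vertex set of a maximal connected induced subgraph. A vertex set $W$ is a vertex cover if every edge has an endpoint in $W$. For vertices $u,v$, a set $S$ is a $u,v$-separator if $u,v$ lie in different components of $G-S$; it is a minimal $u,v$-separator if it is inclusion-minimal among $u,v$-separators; $S$ is a minimal separator of $G$ if it is a minimal $u,v$-separator for some $u,v$. A component $C$ of $G-S$ is a full component associated to $S$ if $N(C)=S$. *)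

From mathcomp Require Import all_boot.
Set Implicit Arguments. Unset Strict Implicit. Unset Printing Implicit Defensive.

Section Graphs.
Variable T : finType.
Variable e : rel T.

Definition simple_graph : Prop := symmetric e /\ irreflexive e.

Definition nbhd (x : T) : {set T} := [set y | e x y].

Definition nbhd_set (S : {set T}) : {set T} :=
  (\bigcup_(v in S) nbhd v) :\: S.

Definition del_rel (S : {set T}) : rel T :=
  fun a b => [&& e a b, a \notin S & b \notin S].

(* the connected component of G - S containing x (meaningful for x \notin S) *)
Definition comp_of (S : {set T}) (x : T) : {set T} :=
  [set y | connect (del_rel S) x y].

Definition is_component (S C : {set T}) : Prop :=
  exists2 x, x \notin S & C = comp_of S x.

Definition vertex_cover (W : {set T}) : Prop :=
  forall x y, e x y -> (x \in W) || (y \in W).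

Definition separates (S : {set T}) (u v : T) : Prop :=
  [/\ u \notin S, v \notin S & v \notin comp_of S u].

Definition min_separates (S : {set T}) (u v : T) : Prop :=
  separates S u v /\ (forall S' : {set T}, S' \proper S -> ~ separates S' u v).

Definition minimal_separator (S : {set T}) : Prop :=
  exists u v, min_separates S u v.

Definition full_component (S C : {set T}) : Prop :=
  is_component S C /\ nbhd_set C = S.

Definition union_of_components (S D : {set T}) : Prop :=
  forall x, x \in D -> x \notin S /\ comp_of S x \subset D.

End Graphs.

(* A vertex x of S outside the cover W has a neighbour in each full
   component (S is their neighbourhood), and that neighbour lies in W since
   the edge must be covered.  Conversely, a vertex with neighbours in both D1
   and D2 cannot lie in either of them: both are unions of components of
   G - S, so no edge leaves D1 or D2 except towards S. *)
From mathcomp Require Import all_boot.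

Set Implicit Arguments. Unset Strict Implicit. Unset Printing Implicit Defensive.

Section VertexCoverAndSeparator.
Variables (T : finType) (e : rel T).

Lemma nbhd_setP (C : {set T}) x :
  symmetric e -> x \in nbhd_set e C -> exists2 v, v \in C & e x v.
Proof.
move=> esym; rewrite inE => /andP [_ /bigcupP [v vC]].
by rewrite inE esym => exv; exists v.
Qed.

Lemma vertex_cover_nbhd_meet (W C D : {set T}) x :
  symmetric e -> vertex_cover e W -> C \subset D ->
  x \in nbhd_set e C -> x \notin W -> nbhd e x :&: (D :&: W) != set0.
Proof.
move=> esym vc sCD /(nbhd_setP esym) [v vC exv] xW.
have vW : v \in W by have := vc _ _ exv; rewrite (negbTE xW).
by apply/set0Pn; exists v; rewrite !inE exv (subsetP sCD _ vC) vW.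
Qed.

Lemma union_of_components_adj (S D : {set T}) x y :
  union_of_components e S D -> x \in D -> y \notin S -> e x y -> y \in D.
Proof.
move=> uD xD yS exy; have [xS sub] := uD x xD.
by apply: (subsetP sub); rewrite inE; apply: connect1; rewrite /del_rel exy xS.
Qed.

Lemma union_of_components_no_edge (S D D' : {set T}) x y :
  union_of_components e S D -> [disjoint D & D'] -> [disjoint D' & S] ->
  x \in D -> y \in D' -> ~~ e x y.
Proof.
move=> uD dDD' dD'S xD yD'; apply/negP => exy.
have yD : y \in D by apply: union_of_components_adj uD xD _ exy;
  rewrite (disjointFr dD'S yD').
by rewrite (disjointFr dDD' yD) in yD'.
Qed.

End VertexCoverAndSeparator.

Theorem lemma1 (T : finType) (e : rel T) (W S D1 D2 : {set T}) :
  simple_graph e ->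
  vertex_cover e W ->
  minimal_separator e S ->
  (* (D1, S, D2) is a partition of V *)
  [disjoint D1 & S] -> [disjoint D2 & S] -> [disjoint D1 & D2] ->
  D1 :|: S :|: D2 = [set: T] ->
  union_of_components e S D1 ->
  union_of_components e S D2 ->
  (exists C, full_component e S C /\ C \subset D1) ->
  (exists C, full_component e S C /\ C \subset D2) ->
  S :\: W =
    [set x in ~: W | (nbhd e x :&: (D1 :&: W) != set0)
                     && (nbhd e x :&: (D2 :&: W) != set0)].
Proof.
move=> [esym _] vc _ d1S d2S d12 cov u1 u2 [C1 [[_ fC1] sC1]] [C2 [[_ fC2] sC2]].
apply/setP => x; rewrite !inE; case xW: (x \in W) => //=.
apply/idP/idP => [xS | /andP [/set0Pn [a] + /set0Pn [b]]].
  by rewrite (vertex_cover_nbhd_meet esym vc sC1) ?(vertex_cover_nbhd_meet esym vc sC2)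
    ?fC1 ?fC2 ?xW.
rewrite !inE => /and3P [exa aD1 _] /and3P [exb bD2 _].
have : x \in D1 :|: S :|: D2 by rewrite cov inE.
rewrite !inE => /orP [/orP [xD1 | //] | xD2].
- by have := union_of_components_no_edge u1 d12 d2S xD1 bD2; rewrite exb.
- have d21 : [disjoint D2 & D1] by rewrite disjoint_sym.
  by have := union_of_components_no_edge u2 d21 d1S xD2 aD1; rewrite exa.
Qed.
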